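(* Let $(V,\mu)$ be an infinite, connected, locally finite weighted graph, $q>1$, $\sigma\in\ell^+(V)$, $o\in V$. If $u\ge0$ on $V$ satisfies $-\Delta u\ge\sigma u^q$ in $V$, then for every integer $R\ge1$, $$u(o)^q\sigma(o)\mu(o)\le\Big(\frac q{q-1}\Big)^{\frac q{q-1}}\Big(\sum_{y\in V}g_{B_R}(o,y)^q\sigma(y)\mu(y)\Big)^{-\frac1{q-1}},$$ where $B_R=B(o,R)$.
   Context: Weighted graph: $\mu_{xy}=\mu_{yx}\ge0$, $\mu_{xy}>0$ iff $x\sim y$, $\mu(x)=\sum_{y\sim x}\mu_{xy}$; Laplacian $\Delta u(x)=\frac1{\mu(x)}\sum_{y\sim x}\mu_{xy}(u(y)-u(x))$. $d$ is the graph distance, $B(o,R)=\{x:d(o,x)\le R\}$. For finite $U\subset V$, $g_U(x,y)=\sum_{n\ge0}\mathbb P_x[X_n=y,n<\tau_U]/\mu(y)$ for $x,y\in U$ (and $0$ otherwise), where $(X_n)$ is the random walk with $P(x,y)=\mu_{xy}/\mu(x)$ and $\tau_U$ its first exit time from $U$. *)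

From HB Require Import structures.
From mathcomp Require Import all_boot all_order all_algebra.
From mathcomp Require Import all_classical all_reals all_analysis.
Set Implicit Arguments. Unset Strict Implicit. Unset Printing Implicit Defensive.
Import Order.TTheory GRing.Theory Num.Theory.
Local Open Scope classical_set_scope.
Local Open Scope ring_scope.

Section Graph.
Variables (R : realType) (V : choiceType) (mu : V -> V -> R).

Definition adj (x y : V) : Prop := 0 < mu x y.
Definition nbrs (x : V) : set V := [set y | adj x y].

Definition weighted_graph : Prop :=
  (forall x y, mu x y = mu y x) /\ (forall x y, 0 <= mu x y).

Definition locally_finite : Prop := forall x, finite_set (nbrs x).

(* graph ball: gball o n = B(o,n) = {x | d(o,x) <= n} *)
Fixpoint gball (o : V) (n : nat) : set V :=
  match n with
  | 0 => [set o]
  | n.+1 => gball o n `|` [set x | exists2 y, gball o n y & adj y x]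
  end.

Definition connected_graph : Prop := forall x y, exists n, gball x n y.

Definition vmu (x : V) : R := \sum_(y \in nbrs x) mu x y.

Definition lap (u : V -> R) (x : V) : R :=
  (vmu x)^-1 * \sum_(y \in nbrs x) mu x y * (u y - u x).

Definition trans (x y : V) : R := mu x y / vmu x.

(* killed walk: killed U n x y = P_x[X_n = y, n < tau_U] *)
Fixpoint killed (U : set V) (n : nat) (x y : V) : R :=
  match n with
  | 0 => if (x \in U) && (x == y) then 1 else 0
  | n.+1 => if x \in U then \sum_(z \in nbrs x) trans x z * killed U n z y
            else 0
  end.

Definition green (U : set V) (x y : V) : R :=
  if (x \in U) && (y \in U) then limn (fun N : nat => \sum_(n < N) killed U n x y) / vmu y
  else 0.

End Graph.

(* Write h for the Green function G_B(o, .) of the ball B = B(o, R) and t = h / u.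
   Testing -Δu >= σ u^q against the Picone-type weight G = h t^(q-1) = h^q / u^(q-1) and
   bounding the discrete gradient terms by Young's inequality gives
     (q - 1) Σ_y σ(y) h(y)^q μ(y) <= q (h(o) / u(o))^(q-1),
   since G is supported in B and h is superharmonic there except for the unit mass at o.
   On the other hand the walk representation u(o) >= Σ_y G_B(o, y) μ(y) (-Δu)(y) gives
   h(o) / u(o) <= (u(o)^q σ(o) μ(o))^(-1); solving the two inequalities for u(o)^q σ(o) μ(o)
   yields the estimate.  As G_B is defined as a limit, the argument is run for the truncated
   occupation sums, which satisfy the same superharmonicity inequality, and then N -> oo. *)

From HB Require Import structures.
From mathcomp Require Import all_boot all_order all_algebra.
From mathcomp Require Import all_classical all_reals all_analysis.
From mathcomp Require Import finmap ring lra.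
Set Implicit Arguments. Unset Strict Implicit. Unset Printing Implicit Defensive.
Import Order.TTheory GRing.Theory Num.Theory numFieldNormedType.Exports.
Local Open Scope classical_set_scope.
Local Open Scope ring_scope.

Section PowerInequalities.
Variables (R : realType) (q : R).
Hypothesis q_gt1 : 1 < q.

Let q_gt0 : 0 < q. Proof. exact: lt_trans q_gt1. Qed.
Let q1_gt0 : 0 < q - 1. Proof. by rewrite subr_gt0. Qed.

(* Tangent-line bound for the convex map s |-> s^q at t, via Young's inequality with
   exponents q and q/(q-1) applied to s and t^(q-1). *)
Lemma powR_tangent_le (s t : R) : 0 <= s -> 0 <= t ->
  q * powR t (q - 1) * s - (q - 1) * powR t q <= powR s q.
Proof.
move=> s_ge0 t_ge0.
have p_gt0 : 0 < q / (q - 1) by rewrite divr_gt0.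
have := conjugate_powR s_ge0 (powR_ge0 t (q - 1)) q_gt0 p_gt0.
have -> : q^-1 + (q / (q - 1))^-1 = 1 by field; rewrite !gt_eqF.
rewrite -powRrM.
have -> : (q - 1) * (q / (q - 1)) = q by field; rewrite gt_eqF.
have -> : powR t q / (q / (q - 1)) = (q - 1) * powR t q / q by field; rewrite !gt_eqF.
move=> /(_ erefl); rewrite -(ler_pM2r q_gt0) mulrDl !divfK ?gt_eqF //.
by rewrite lerBlDr mulrC (mulrC s) mulrA.
Qed.

Lemma picone_powR (t h u : R) : 0 <= t -> 0 <= h -> 0 < u ->
  q * powR t (q - 1) * h - (q - 1) * powR t q * u <= h * powR (h / u) (q - 1).
Proof.
move=> t_ge0 h_ge0 u_gt0.
have hu_ge0 : 0 <= h / u by rewrite divr_ge0 // ltW.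
have := @powR_tangent_le _ _ hu_ge0 t_ge0.
rewrite -(mulr_powRB1 hu_ge0 q_gt0) -(ler_pM2r u_gt0).
congr (_ <= _); field; by rewrite gt_eqF.
Qed.

End PowerInequalities.

Lemma sum_delta (R : pzRingType) (T : eqType) (r : seq T) (x : T) (F : T -> R) :
  uniq r -> x \in r -> \sum_(y <- r) (x == y)%:R * F y = F x.
Proof.
move=> r_uniq xr; rewrite (bigD1_seq x) //= eqxx mul1r big1 ?addr0 // => y yx.
by rewrite eq_sym (negbTE yx) mul0r.
Qed.

Lemma fsbig_fset_set_widen (R : zmodType) (T : choiceType) (P W : set T)
    (F : T -> R) :
  finite_set W -> P `<=` W -> (forall z, ~ P z -> F z = 0) ->
  \sum_(z \in P) F z = \sum_(z <- fset_set W) F z.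
Proof.
move=> W_fin PW F0; apply: fsbig_fwiden => //.
- by move=> z /PW Wz /=; rewrite in_fset_set // mem_set.
- by move=> z [_ Pz]; rewrite /preimage /= F0.
Qed.

Section WeightedGraph.
Variables (R : realType) (V : choiceType) (mu : V -> V -> R).
Hypothesis mu_wg : weighted_graph mu.

Lemma mu_ge0 x y : 0 <= mu x y. Proof. by case: mu_wg. Qed.

Lemma mu_sym x y : mu x y = mu y x. Proof. by case: mu_wg. Qed.

Lemma mu_eq0 x y : ~ adj mu x y -> mu x y = 0.
Proof. by move=> nxy; apply/eqP; rewrite eq_le mu_ge0 andbT leNgt; apply/negP. Qed.

Lemma vmu_ge0 x : 0 <= vmu mu x.
Proof. by apply: fsumr_ge0 => y _; exact: mu_ge0. Qed.

Lemma trans_ge0 x y : 0 <= trans mu x y.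
Proof. by rewrite divr_ge0 ?mu_ge0 ?vmu_ge0. Qed.

Lemma killed_ge0 (U : set V) n x y : 0 <= killed mu U n x y.
Proof.
elim: n x => [|n IHn] x /=; first by case: ifP.
by case: ifP => // _; apply: fsumr_ge0 => z _; rewrite mulr_ge0 ?trans_ge0.
Qed.

Lemma killed_outl (U : set V) n x y : ~ U x -> killed mu U n x y = 0.
Proof.
move=> Ux; have {}Ux : (x \in U) = false by apply/negP => /set_mem.
by case: n => [|n] /=; rewrite Ux.
Qed.

Lemma killed_outr (U : set V) n x y : ~ U y -> killed mu U n x y = 0.
Proof.
move=> Uy; elim: n x => [|n IHn] x /=.
  by case: ifP => // /andP[/set_mem Ux /eqP xy]; case: Uy; rewrite -xy.
by case: ifP => // _; rewrite fsbig1 // => z _; rewrite IHn mulr0.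
Qed.

Lemma killed0 (U : set V) x y : U x -> killed mu U 0 x y = (x == y)%:R.
Proof. by move=> Ux /=; rewrite mem_set //; case: eqVneq. Qed.

Lemma killed0r (U : set V) x y : U y -> killed mu U 0 x y = (x == y)%:R.
Proof. by move=> Uy /=; have [->|xy] := eqVneq x y; rewrite ?andbF // mem_set. Qed.

(* The expected number of visits to y before time N of the walk started at x and killed on
   leaving U; green U x y is its limit divided by vmu y. *)
Definition occupation (U : set V) N x y := \sum_(n < N) killed mu U n x y.

Lemma occupation_ge0 (U : set V) N x y : 0 <= occupation U N x y.
Proof. by apply: sumr_ge0 => n _; exact: killed_ge0. Qed.

Lemma occupation_outr (U : set V) N x y : ~ U y -> occupation U N x y = 0.
Proof. by move=> Uy; apply: big1 => n _; exact: killed_outr. Qed.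

Lemma occupation_nondecreasing (U : set V) x y :
  nondecreasing_seq (fun N => occupation U N x y).
Proof.
move=> N M NM; rewrite /occupation -(subnKC NM) big_split_ord /= lerDl.
by apply: sumr_ge0 => n _; exact: killed_ge0.
Qed.

Variables (U W : set V).
Hypotheses (W_fin : finite_set W) (nbrsW : forall x, U x -> nbrs mu x `<=` W).
Hypothesis UW : U `<=` W.
Local Notation sW := (fset_set W : {fset V}).

Lemma mem_fset_setW x : U x -> x \in sW.
Proof. by move=> /UW Wx; rewrite in_fset_set // mem_set. Qed.

Lemma fsbig_nbrsW x (F : V -> R) : U x -> (forall z, ~ adj mu x z -> F z = 0) ->
  \sum_(z \in nbrs mu x) F z = \sum_(z <- sW) F z.
Proof. by move=> Ux; apply: fsbig_fset_set_widen => //; exact: nbrsW. Qed.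

Lemma vmu_fset x : U x -> vmu mu x = \sum_(z <- sW) mu x z.
Proof. by move=> Ux; apply: fsbig_nbrsW => // z; exact: mu_eq0. Qed.

Lemma killedS n x y : U x ->
  killed mu U n.+1 x y = \sum_(z <- sW) trans mu x z * killed mu U n z y.
Proof.
move=> Ux /=; rewrite mem_set //; apply: fsbig_nbrsW => // z xz.
by rewrite /trans mu_eq0 // !mul0r.
Qed.

Lemma killedSr n x y : U y ->
  killed mu U n.+1 x y = \sum_(z <- sW) killed mu U n x z * trans mu z y.
Proof.
move=> Uy; elim: n x => [|n IHn] x; have [Ux|Ux] := pselect (U x);
  try by rewrite killed_outl // big1 // => z _; rewrite killed_outl // mul0r.
  rewrite killedS //; under eq_bigr => z _ do rewrite killed0r // eq_sym mulrC.
  rewrite sum_delta ?mem_fset_setW //.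
  by under eq_bigr => z _ do rewrite killed0 //; rewrite sum_delta ?mem_fset_setW.
rewrite killedS //; under eq_bigr => z _ do rewrite IHn mulr_sumr.
rewrite exchange_big; apply: eq_bigr => w _.
by rewrite killedS // mulr_suml; apply: eq_bigr => z _; rewrite mulrA.
Qed.

Lemma occupationS N x y : U x ->
  occupation U N.+1 x y = (x == y)%:R + \sum_(z <- sW) trans mu x z * occupation U N z y.
Proof.
move=> Ux; rewrite /occupation big_ord_recl killed0 //; congr (_ + _).
under eq_bigr => n _ do rewrite killedS //.
by rewrite exchange_big; apply: eq_bigr => z _; rewrite mulr_sumr.
Qed.

Lemma occupationSr N x y : U x -> U y ->
  occupation U N.+1 x y = (x == y)%:R + \sum_(z <- sW) occupation U N x z * trans mu z y.
Proof.
move=> Ux Uy; rewrite /occupation big_ord_recl killed0 //; congr (_ + _).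
under eq_bigr => n _ do rewrite killedSr //.
by rewrite exchange_big; apply: eq_bigr => z _; rewrite mulr_suml.
Qed.

Lemma occupation_superharmonic N x y : U x -> U y ->
  occupation U N x y <= (x == y)%:R + \sum_(z <- sW) mu y z * (occupation U N x z / vmu mu z).
Proof.
move=> Ux Uy; apply: le_trans (occupation_nondecreasing _ _ _ (leqnSn N)) _.
rewrite occupationSr //= lerD2l.
by under eq_bigr => z _ do rewrite /trans mulrCA mu_sym.
Qed.

Hypothesis vmu_gt0 : forall x, 0 < vmu mu x.

Lemma sum_mu_lap (u : V -> R) x : U x ->
  \sum_(z <- sW) mu x z * u z = vmu mu x * (u x + lap mu u x).
Proof.
move=> Ux; have vx_neq0 : vmu mu x != 0 by rewrite gt_eqF.
rewrite /lap (fsbig_nbrsW Ux); last by move=> z xz; rewrite mu_eq0 // mul0r.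
rewrite mulrDr mulrA mulfV // mul1r (vmu_fset Ux) mulr_suml -big_split /=.
by apply: eq_bigr => z _; ring.
Qed.

Lemma sum_trans_lap (u : V -> R) x : U x ->
  \sum_(z <- sW) trans mu x z * u z = u x + lap mu u x.
Proof.
move=> Ux; rewrite -[RHS](mulKf (lt0r_neq0 (vmu_gt0 x))) -sum_mu_lap // mulr_sumr.
by apply: eq_bigr => z _; rewrite mulrA [_^-1 * _]mulrC.
Qed.

Lemma occupation_lap_le (u : V -> R) N x : (forall x, 0 <= u x) -> U x ->
  \sum_(y <- sW) occupation U N x y * - lap mu u y <= u x.
Proof.
move=> u_ge0; elim: N x => [|N IHN] x Ux.
  by rewrite big1 // => y _; rewrite /occupation big_ord0 mul0r.
under eq_bigr => y _ do rewrite occupationS // mulrDl.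
rewrite big_split /= sum_delta ?mem_fset_setW //.
have -> : u x = - lap mu u x + \sum_(z <- sW) trans mu x z * u z.
  by rewrite sum_trans_lap // addrCA addNr addr0.
rewrite lerD2l.
under eq_bigr => y _ do rewrite mulr_suml.
rewrite exchange_big /=; apply: ler_sum => z _.
under eq_bigr => y _ do rewrite -mulrA.
rewrite -mulr_sumr ler_wpM2l ?trans_ge0 //.
have [Uz|Uz] := pselect (U z); first exact: IHN.
by rewrite big1 // => y _; rewrite /occupation big1 ?mul0r // => n _; rewrite killed_outl.
Qed.

(* That is, - \sum_(x in U) vmu x * lap G x >= 0 for every G >= 0 supported in U. *)
Lemma sum_defect_ge0 (G : V -> R) : (forall x, 0 <= G x) -> (forall x, ~ U x -> G x = 0) ->
  0 <= \sum_(x <- sW | x \in U) (vmu mu x * G x - \sum_(z <- sW) mu x z * G z).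
Proof.
move=> G_ge0 G_out; rewrite sumrB subr_ge0 exchange_big /= [leRHS]big_mkcond /=.
apply: ler_sum => z _; rewrite -mulr_suml.
have [Uz|Uz] := pselect (U z); last by rewrite G_out // !mulr0 if_same.
rewrite mem_set // ler_wpM2r // (vmu_fset Uz) [leRHS](bigID (fun x => x \in U)) /=.
under eq_bigr => x _ do rewrite mu_sym.
by rewrite lerDl; apply: sumr_ge0 => x _; exact: mu_ge0.
Qed.

Variables (q : R) (sigma u h : V -> R) (o : V).
Hypotheses (q_gt1 : 1 < q) (u_gt0 : forall x, 0 < u x) (h_ge0 : forall x, 0 <= h x).
Hypothesis reaction : forall x, sigma x * powR (u x) q <= - lap mu u x.
Hypothesis h_out : forall x, ~ U x -> h x = 0.
Hypothesis h_super : forall y, U y ->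
  vmu mu y * h y <= (o == y)%:R + \sum_(z <- sW) mu y z * h z.

Let q_gt0 : 0 < q. Proof. exact: lt_trans q_gt1. Qed.

Let q1_gt0 : 0 < q - 1. Proof. by rewrite subr_gt0. Qed.

Let G z := h z * powR (h z / u z) (q - 1).

Lemma picone_step x : U x ->
  vmu mu x * G x - \sum_(z <- sW) mu x z * G z <=
    q * powR (h x / u x) (q - 1) * (o == x)%:R - (q - 1) * (vmu mu x * sigma x * powR (h x) q).
Proof.
move=> Ux; set t := h x / u x; set T := powR t (q - 1); set S := powR t q.
have t_ge0 : 0 <= t by rewrite divr_ge0 // ltW.
have picone : q * T * \sum_(z <- sW) mu x z * h z - (q - 1) * S * \sum_(z <- sW) mu x z * u z
    <= \sum_(z <- sW) mu x z * G z.
  rewrite !mulr_sumr -sumrB; apply: ler_sum => z _.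
  rewrite (_ : _ - _ = mu x z * (q * T * h z - (q - 1) * S * u z)); last by ring.
  by apply: ler_wpM2l; [exact: mu_ge0 | exact: picone_powR].
have super : 0 <= q * T * (\sum_(z <- sW) mu x z * h z - (vmu mu x * h x - (o == x)%:R)).
  apply: mulr_ge0; first by rewrite mulr_ge0 ?powR_ge0 // ltW.
  by rewrite subr_ge0 lerBlDl; exact: h_super.
have mean : (q - 1) * S * \sum_(z <- sW) mu x z * u z =
    (q - 1) * vmu mu x * (T * h x) + (q - 1) * vmu mu x * (S * lap mu u x).
  rewrite sum_mu_lap // -(_ : S * u x = T * h x); last first.
    by rewrite /S -(mulr_powRB1 t_ge0 q_gt0) -/T /t; field; rewrite gt_eqF.
  by ring.
have react : 0 <= (q - 1) * vmu mu x * (- (S * lap mu u x) - sigma x * powR (h x) q).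
  apply: mulr_ge0; first by rewrite mulr_ge0 ?vmu_ge0 // ltW.
  rewrite subr_ge0 -mulrN.
  rewrite -[powR (h x) q](_ : S * powR (u x) q = _); last first.
    by rewrite /S -powRM ?(ltW (u_gt0 x)) // /t divfK ?gt_eqF.
  by rewrite mulrCA ler_wpM2l ?powR_ge0.
(* The terms in (q - 1) T h(x) vmu(x) cancel: the claim is picone + super + react. *)
rewrite mean in picone; rewrite /G -/t -/T.
nra.
Qed.

Hypothesis Uo : U o.

Lemma sum_reaction_le :
  \sum_(x <- sW) vmu mu x * sigma x * powR (h x) q <= q / (q - 1) * powR (h o / u o) (q - 1).
Proof.
have G_ge0 x : 0 <= G x by rewrite mulr_ge0 ?powR_ge0.
have G_out x : ~ U x -> G x = 0 by move=> Ux; rewrite /G h_out ?mul0r.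
have delta : \sum_(x <- sW | x \in U) q * powR (h x / u x) (q - 1) * (o == x)%:R =
    q * powR (h o / u o) (q - 1).
  rewrite big_mkcond (bigD1_seq o) ?mem_fset_setW //= mem_set // eqxx mulr1.
  by rewrite big1 ?addr0 // => x xo; rewrite eq_sym (negbTE xo) mulr0 if_same.
have supp_h : \sum_(x <- sW) vmu mu x * sigma x * powR (h x) q =
    \sum_(x <- sW | x \in U) vmu mu x * sigma x * powR (h x) q.
  rewrite [RHS]big_mkcond; apply: eq_bigr => x _; case: ifPn => // /negP Ux.
  by rewrite h_out ?powR0 ?mulr0 ?gt_eqF // => /mem_set.
have := le_trans (sum_defect_ge0 G_ge0 G_out)
  (ler_sum _ (fun x Ux => picone_step (set_mem Ux))).
rewrite sumrB subr_ge0 delta -mulr_sumr -supp_h => H.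
by rewrite mulrAC ler_pdivlMr // mulrC.
Qed.

End WeightedGraph.

Section Balls.
Variables (R : realType) (V : choiceType) (mu : V -> V -> R).

Lemma gball_center o n : gball mu o n o.
Proof. by elim: n => [|n IHn] //=; left. Qed.

Lemma gball_nbrs o n y : gball mu o n y -> nbrs mu y `<=` gball mu o n.+1.
Proof. by move=> oy z yz; right; exists y. Qed.

Lemma gball_finite o n : locally_finite mu -> finite_set (gball mu o n).
Proof.
move=> mu_lf; elim: n => [|n IHn] /=; first exact: finite_set1.
rewrite finite_setU; split => //.
apply: (@sub_finite_set _ _ (\bigcup_(y in gball mu o n) nbrs mu y)).
  by move=> z [y oy yz]; exists y.
by apply: bigcup_finite => // y _; exact: mu_lf.
Qed.

Lemma gball_sub (P : set V) o n :
  P o -> (forall y z, P y -> adj mu y z -> P z) -> gball mu o n `<=` P.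
Proof.
move=> Po P_adj; elim: n => [|n IHn] /= y; first by move=> ->.
by case=> [/IHn //|[x /IHn Px xy]]; exact: P_adj xy.
Qed.

Lemma connected_adj_closed (P : set V) {o} : connected_graph mu ->
  P o -> (forall y z, P y -> adj mu y z -> P z) -> forall y, P y.
Proof. by move=> mu_conn Po P_adj y; have [n oy] := mu_conn o y; exact: gball_sub oy. Qed.

End Balls.

Section Connected.
Variables (R : realType) (V : choiceType) (mu : V -> V -> R).
Hypotheses (mu_wg : weighted_graph mu) (mu_lf : locally_finite mu).
Hypothesis mu_conn : connected_graph mu.

Lemma mu_le_vmu {x z} : adj mu x z -> mu x z <= vmu mu x.
Proof.
move=> xz; rewrite /vmu (fsbigD1 z) //= lerDl.
by apply: fsumr_ge0 => y _; exact: mu_ge0.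
Qed.

Lemma vmu_gt0 : infinite_set [set: V] -> forall x, 0 < vmu mu x.
Proof.
move=> V_inf x; rewrite lt_neqAle vmu_ge0 // andbT; apply/negP => /eqP vx0.
have x_isolated z : ~ adj mu x z.
  by move=> xz; have := lt_le_trans xz (mu_le_vmu xz); rewrite -vx0 ltxx.
apply: V_inf; apply: (@sub_finite_set _ _ [set x]); last exact: finite_set1.
move=> y _; apply: (connected_adj_closed (P := [set x]) mu_conn) => // z w -> xw.
by case: (x_isolated w).
Qed.

Variable u : V -> R.
Hypotheses (u_ge0 : forall x, 0 <= u x) (u_superharmonic : forall x, 0 <= - lap mu u x).
Hypothesis vmu_pos : forall x, 0 < vmu mu x.

Lemma superharmonic_zero_adj y z : u y = 0 -> adj mu y z -> u z = 0.
Proof.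
move=> uy0 yz.
have term_ge0 w : 0 <= mu y w * (u w - u y) by rewrite uy0 subr0 mulr_ge0 ?mu_ge0.
have sum0 : \sum_(w \in nbrs mu y) mu y w * (u w - u y) = 0.
  apply/eqP; rewrite eq_le fsumr_ge0 // andbT.
  by have := u_superharmonic y; rewrite /lap oppr_ge0 pmulr_rle0 // invr_gt0.
have := pfsumr_eq0 (mu_lf y) (fun w _ => term_ge0 w) sum0 yz.
by move/eqP; rewrite uy0 subr0 mulf_eq0 gt_eqF //= => /eqP.
Qed.

Lemma superharmonic_gt0 o : 0 < u o -> forall x, 0 < u x.
Proof.
move=> uo_gt0 x; rewrite lt_neqAle u_ge0 andbT eq_sym; apply/eqP => ux0.
have := connected_adj_closed (P := fun y => u y = 0) mu_conn ux0 superharmonic_zero_adj o.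
by move=> uo0; rewrite uo0 ltxx in uo_gt0.
Qed.

End Connected.

Lemma cvgn_powR_gt0 (R : realType) (p a : R) (f : nat -> R) : 0 < a ->
  f n @[n --> \oo] --> a -> powR (f n) p @[n --> \oo] --> powR a p.
Proof.
move=> a_gt0 fa; have -> : powR a p = expR (p * ln a) by rewrite /powR gt_eqF // mulrC.
apply: (@cvg_trans _ ((fun n => expR (p * ln (f n))) @ \oo)).
  apply: near_eq_cvg; near=> n; rewrite /powR gt_eqF 1?mulrC //.
  by near: n; exact: cvgr_gt fa _ a_gt0.
apply: (cvg_comp (fun n => p * ln (f n))); last exact: continuous_expR.
by apply: cvgMl_tmp; apply: (cvg_comp f _ fa); exact: continuous_ln.
Unshelve. all: end_near. Qed.

Lemma nondecreasing_cvgn_powR (R : realType) (p : R) (f : nat -> R) : p != 0 ->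
  nondecreasing_seq f -> (forall n, 0 <= f n) -> cvgn f ->
  powR (f n) p @[n --> \oo] --> powR (limn f) p.
Proof.
move=> p_neq0 f_nd f_ge0 f_cvg; have f_le := nondecreasing_cvgn_le f_nd f_cvg.
have [L_gt0|L_le0] := ltP 0 (limn f); first exact: cvgn_powR_gt0.
have f0 n : f n = 0 by apply/le_anti; rewrite f_ge0 andbT (le_trans (f_le n)).
have -> : (fun n => powR (f n) p) = fun=> powR (limn f) p.
  by apply: funext => n; rewrite f0 (@le_anti _ _ (limn f) 0) // L_le0 -(f0 0) f_le.
exact: cvg_cst.
Qed.

Lemma le_powR_bound_inv (R : realType) (q a S : R) : 1 < q -> 0 < a -> 0 < S ->
  S <= q / (q - 1) * powR a^-1 (q - 1) ->
  a <= powR (q / (q - 1)) (q / (q - 1)) * powR S (- (q - 1)^-1).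
Proof.
move=> q_gt1 a_gt0 S_gt0 S_le.
have q1_gt0 : 0 < q - 1 by rewrite subr_gt0.
set c := q / (q - 1); set p := (q - 1)^-1.
have p_gt0 : 0 < p by rewrite invr_gt0.
have c_ge1 : 1 <= c by rewrite /c ler_pdivlMr // mul1r lerBlDr lerDl.
have Sp : powR S p <= powR c p * a^-1.
  have -> : powR c p * a^-1 = powR (c * powR a^-1 (q - 1)) p.
    rewrite powRM ?powR_ge0 ?(le_trans ler01) // -powRrM mulfV ?gt_eqF //.
    by rewrite powRr1 // invr_ge0 ltW.
  apply: ge0_ler_powR; rewrite ?nnegrE ?(ltW p_gt0) ?(ltW S_gt0) //.
  by rewrite mulr_ge0 ?powR_ge0 // (le_trans ler01).
have c_pow : powR c p <= powR c c.
  by apply: ler_powR => //; rewrite /c /p -{1}[_^-1]mul1r ler_pM2r // ltW.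
rewrite powRN; apply: le_trans (ler_wpM2r _ c_pow); last by rewrite invr_ge0 powR_ge0.
by rewrite ler_pdivlMr ?powR_gt0 // mulrC -ler_pdivlMr.
Qed.

Section GreenBound.
Variables (R : realType) (V : choiceType) (mu : V -> V -> R).
Variables (q : R) (sigma u : V -> R) (o : V) (Rad : nat).
Hypotheses (mu_wg : weighted_graph mu) (mu_lf : locally_finite mu).
Hypothesis vmu_pos : forall x, 0 < vmu mu x.
Hypotheses (q_gt1 : 1 < q) (sigma_ge0 : forall x, 0 <= sigma x).
Hypothesis u_gt0 : forall x, 0 < u x.
Hypothesis reaction : forall x, sigma x * powR (u x) q <= - lap mu u x.

Local Notation U := (gball mu o Rad).
Local Notation W := (gball mu o Rad.+1).
Local Notation sW := (fset_set W : {fset V}).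

Let W_fin : finite_set W. Proof. exact: gball_finite. Qed.
Let nbrsW x : U x -> nbrs mu x `<=` W. Proof. exact: gball_nbrs. Qed.
Let UW : U `<=` W. Proof. by move=> x Ux; left. Qed.
Let Uo : U o. Proof. exact: gball_center. Qed.
Let u_ge0 x : 0 <= u x. Proof. exact: ltW. Qed.
Let neglap_ge0 x : 0 <= - lap mu u x.
Proof. by apply: le_trans (reaction x); rewrite mulr_ge0 ?powR_ge0. Qed.

Lemma occupation_neglap_le N y : U y -> occupation mu U N o y * - lap mu u y <= u o.
Proof.
move=> Uy; have := occupation_lap_le mu_wg W_fin nbrsW UW vmu_pos N u_ge0 Uo.
apply: le_trans; rewrite (bigD1_seq y) ?(mem_fset_setW W_fin UW Uy) //= lerDl.
by apply: sumr_ge0 => z _; rewrite mulr_ge0 ?occupation_ge0.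
Qed.

Lemma occupation_cvgn y : 0 < sigma y -> cvgn (fun N => occupation mu U N o y).
Proof.
move=> sy_gt0; apply: nondecreasing_is_cvgn; first exact: occupation_nondecreasing.
have [Uy|Uy] := pselect (U y); last by exists 0 => _ [N _ <-]; rewrite occupation_outr.
have lap_gt0 : 0 < - lap mu u y by apply: lt_le_trans (reaction y); rewrite mulr_gt0 ?powR_gt0.
by exists (u o / - lap mu u y) => _ [N _ <-]; rewrite ler_pdivlMr ?occupation_neglap_le.
Qed.

Lemma occupation_energy_le N : 0 < sigma o ->
  \sum_(y <- sW) vmu mu y * sigma y * powR (occupation mu U N o y / vmu mu y) q <=
    q / (q - 1) * powR (powR (u o) q * sigma o * vmu mu o)^-1 (q - 1).
Proof.
move=> so_gt0; set h := fun y => occupation mu U N o y / vmu mu y.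
have h_ge0 y : 0 <= h y by rewrite divr_ge0 ?occupation_ge0 // ltW.
apply: le_trans (sum_reaction_le mu_wg W_fin nbrsW UW vmu_pos q_gt1 u_gt0 h_ge0
  reaction _ _ Uo) _.
- by move=> y Uy; rewrite /h occupation_outr ?mul0r.
- by move=> y Uy; rewrite /h mulrC divfK ?gt_eqF //; exact: occupation_superharmonic.
rewrite ler_pM2l; last by rewrite divr_gt0 ?subr_gt0 // (lt_trans ltr01).
have a_gt0 : 0 < powR (u o) q * sigma o * vmu mu o by rewrite !mulr_gt0 ?powR_gt0.
apply: ge0_ler_powR.
- by rewrite subr_ge0 ltW.
- by rewrite nnegrE divr_ge0 // ltW.
- by rewrite nnegrE invr_ge0 ltW.
have := le_trans (ler_wpM2l (occupation_ge0 mu_wg U N o o) (reaction o)) (occupation_neglap_le N Uo).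
rewrite -[leRHS]mul1r -ler_pdivrMr // => ratio.
rewrite -(ler_pM2r a_gt0) mulVf ?gt_eqF //.
rewrite (_ : h o / u o * (powR (u o) q * sigma o * vmu mu o) =
  occupation mu U N o o * (sigma o * powR (u o) q) / u o) //.
by rewrite /h; field; rewrite !gt_eqF.
Qed.

Lemma green_occupation y :
  green mu U o y = limn (fun N => occupation mu U N o y) / vmu mu y.
Proof.
rewrite /green mem_set //=; case: ifPn => // /negP Uy.
have -> : (fun N => occupation mu U N o y) = fun=> 0.
  by apply: funext => N; rewrite occupation_outr // => /mem_set.
by rewrite lim_cst // mul0r.
Qed.

Lemma cvg_green_term y :
  vmu mu y * sigma y * powR (occupation mu U N o y / vmu mu y) q @[N --> \oo] -->
    powR (green mu U o y) q * sigma y * vmu mu y.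
Proof.
have [sy0|sy_gt0] := eqVneq (sigma y) 0.
  under eq_fun => N do rewrite sy0 mulr0 mul0r.
  by rewrite sy0 mulr0 mul0r; exact: cvg_cst.
have {}sy_gt0 : 0 < sigma y by rewrite lt0r sy_gt0 sigma_ge0.
set c := vmu mu y * sigma y * powR (vmu mu y)^-1 q.
have scale x : 0 <= x -> vmu mu y * sigma y * powR (x / vmu mu y) q = c * powR x q.
  by move=> x_ge0; rewrite powRM ?invr_ge0 ?vmu_ge0 // /c; ring.
have L_ge0 : 0 <= limn (fun N => occupation mu U N o y).
  apply: le_trans (nondecreasing_cvgn_le _ (occupation_cvgn sy_gt0) 0).
    exact: occupation_ge0.
  exact: occupation_nondecreasing.
have -> : powR (green mu U o y) q * sigma y * vmu mu y =
    c * powR (limn (fun N => occupation mu U N o y)) q.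
  by rewrite -scale // green_occupation; ring.
under eq_fun => N do rewrite scale ?occupation_ge0 //.
apply: cvgMl_tmp; apply: nondecreasing_cvgn_powR (occupation_cvgn sy_gt0).
- by rewrite gt_eqF // (lt_trans ltr01).
- exact: occupation_nondecreasing.
- by move=> N; exact: occupation_ge0.
Qed.

Let green_sum_fset :
  \sum_(y \in [set: V]) powR (green mu U o y) q * sigma y * vmu mu y =
  \sum_(y <- sW) powR (green mu U o y) q * sigma y * vmu mu y.
Proof.
apply: fsbigTE => y yW; rewrite /green.
have -> : (y \in U) = false.
  by apply/negP => /set_mem /(mem_fset_setW W_fin UW); rewrite (negbTE yW).
by rewrite andbF powR0 ?mul0r // gt_eqF // (lt_trans ltr01).
Qed.

Lemma green_sum_le : 0 < sigma o ->
  \sum_(y \in [set: V]) powR (green mu U o y) q * sigma y * vmu mu y <=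
    q / (q - 1) * powR (powR (u o) q * sigma o * vmu mu o)^-1 (q - 1).
Proof.
move=> so_gt0; rewrite green_sum_fset.
have cvg_sum : \sum_(y <- sW) vmu mu y * sigma y * powR (occupation mu U N o y / vmu mu y) q
    @[N --> \oo] --> \sum_(y <- sW) powR (green mu U o y) q * sigma y * vmu mu y.
  by apply: (@cvg_big _ _ +%R 0 xpredT add_continuous) => // y _; exact: cvg_green_term.
by apply: (cvgr_to_le cvg_sum); apply: filterE => N; exact: occupation_energy_le.
Qed.

Lemma green_sum_gt0 : 0 < sigma o ->
  0 < \sum_(y \in [set: V]) powR (green mu U o y) q * sigma y * vmu mu y.
Proof.
move=> so_gt0; rewrite green_sum_fset (bigD1_seq o) ?(mem_fset_setW W_fin UW Uo) //=.
apply: (@lt_le_trans _ _ (powR (green mu U o o) q * sigma o * vmu mu o)); last first.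
  by rewrite addrC lerDr; apply: sumr_ge0 => y _; rewrite !mulr_ge0 ?powR_ge0 ?vmu_ge0.
rewrite !mulr_gt0 ?powR_gt0 // green_occupation divr_gt0 //.
apply: lt_le_trans (nondecreasing_cvgn_le _ (occupation_cvgn so_gt0) 1).
  by rewrite /occupation big_ord1 killed0 // eqxx ltr01.
exact: occupation_nondecreasing.
Qed.

End GreenBound.

Theorem lemma4p2 (R : realType) (V : choiceType) (mu : V -> V -> R)
  (q : R) (sigma u : V -> R) (o : V) (Rad : nat) :
  weighted_graph mu -> locally_finite mu -> connected_graph mu ->
  infinite_set [set: V] ->
  1 < q -> (forall x, 0 <= sigma x) ->
  (forall x, 0 <= u x) ->
  (forall x, - lap mu u x >= sigma x * powR (u x) q) ->
  (1 <= Rad)%N ->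
  powR (u o) q * sigma o * vmu mu o <=
    powR (q / (q - 1)) (q / (q - 1)) *
    powR (\sum_(y \in [set: V])
            powR (green mu (gball mu o Rad) o y) q * sigma y * vmu mu y)
         (- (q - 1)^-1).
Proof.
move=> mu_wg mu_lf mu_conn V_inf q_gt1 sigma_ge0 u_ge0 reaction _.
have [uo0|uo_neq0] := eqVneq (u o) 0.
  by rewrite uo0 powR0 ?gt_eqF ?(lt_trans ltr01) // !mul0r mulr_ge0 ?powR_ge0.
have [so0|so_neq0] := eqVneq (sigma o) 0.
  by rewrite so0 mulr0 mul0r mulr_ge0 ?powR_ge0.
have so_gt0 : 0 < sigma o by rewrite lt0r so_neq0 sigma_ge0.
have vmu_pos := vmu_gt0 mu_wg mu_lf mu_conn V_inf.
have neglap_ge0 x : 0 <= - lap mu u x.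
  by apply: le_trans (reaction x); rewrite mulr_ge0 ?powR_ge0.
have uo_gt0 : 0 < u o by rewrite lt0r uo_neq0 u_ge0.
have u_gt0 := superharmonic_gt0 mu_wg mu_lf mu_conn u_ge0 neglap_ge0 vmu_pos uo_gt0.
apply: le_powR_bound_inv => //; first by rewrite !mulr_gt0 ?powR_gt0.
- exact: green_sum_gt0 Rad mu_wg mu_lf vmu_pos q_gt1 sigma_ge0 u_gt0 reaction so_gt0.
- exact: green_sum_le Rad mu_wg mu_lf vmu_pos q_gt1 sigma_ge0 u_gt0 reaction so_gt0.
Qed.
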